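(* Let $m$ be even and let $G=B(m;R,S,T)$ be a bicirculant with $m/2\notin R\cup T$, and let $G^{=}=B(m;R\cup\{m/2\},S,T\cup\{m/2\})$. Suppose $G^{=}$ is connected. Then either $G$ is connected, or $G$ consists of exactly two connected components, both isomorphic to a connected graph $G_0$; in the latter case $G^{=}$ is isomorphic to the cartesian product $G_0\,\square\,K_2$.
   Context: For an integer $m\ge 1$ and subsets $R,S,T\subseteq\mathbb{Z}_m$ with $R=-R$, $T=-T$, $0\notin R\cup T$, $0\in S$ and $|R|=|T|$, the bicirculant $B(m;R,S,T)$ is the graph with vertex set $\{u_0,\dots,u_{m-1}\}\cup\{v_0,\dots,v_{m-1}\}$ and edge set $\{u_iu_{i+j}: i\in\mathbb{Z}_m, j\in R\}\cup\{v_iv_{i+j}: i\in\mathbb{Z}_m, j\in T\}\cup\{u_iv_{i+j}: i\in\mathbb{Z}_m, j\in S\}$ (indices mod $m$). *)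

From mathcomp Require Import all_boot all_algebra.
Set Implicit Arguments. Unset Strict Implicit. Unset Printing Implicit Defensive.
Import GRing.Theory.
Local Open Scope ring_scope.

(* A (simple) graph is given by a finite vertex type V and an adjacency
   relation e : rel V (required symmetric and irreflexive where needed). *)

(* Bicirculant B(m;R,S,T): vertices inl i = u_i, inr i = v_i, i in Z_m. *)
Definition bicirc_adj (m : nat) (R S T : {set 'Z_m}) : rel ('Z_m + 'Z_m) :=
  fun x y =>
    match x, y with
    | inl i, inl j => (j - i) \in R
    | inr i, inr j => (j - i) \in T
    | inl i, inr j => (j - i) \in S
    | inr j, inl i => (j - i) \in S
    end.

Definition halfZ (m : nat) : 'Z_m := (m./2)%:R.

Definition symset (m : nat) (X : {set 'Z_m}) : Prop := [set - j | j in X] = X.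

Definition gconnected (V : finType) (e : rel V) : Prop :=
  forall x y, connect e x y.

Definition components (V : finType) (e : rel V) : {set {set V}} :=
  [set [set y | connect e x y] | x : V].

Definition giso (V W : finType) (e : rel V) (f : rel W) : Prop :=
  exists h : V -> W, bijective h /\ forall x y, f (h x) (h y) = e x y.

Definition induced (V : finType) (e : rel V) (C : {set V}) :
  rel {x : V | x \in C} := fun x y => e (val x) (val y).

Definition cartK2 (V : finType) (e : rel V) : rel (V * bool) :=
  fun x y => ((x.2 == y.2) && e x.1 y.1) || ((x.1 == y.1) && (x.2 != y.2)).
Arguments induced {V} e C.

From mathcomp Require Import all_boot all_algebra.
Set Implicit Arguments. Unset Strict Implicit. Unset Printing Implicit Defensive.
Import GRing.Theory.

(* Translation by m/2 is an involutive automorphism t of G = B(m;R,S,T), and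
   G^= is G together with the perfect matching {x, t x}.  As G^= is connected,
   every vertex lies in the component C of u_0 or in its image t(C).  If these
   meet, G is connected.  Otherwise C and t(C) are the two components of G, t
   maps one isomorphically onto the other, and sending x to (x, false) on C
   and to (t x, true) on t(C) is an isomorphism from G^= onto C □ K2. *)

Lemma connect_homo (V W : finType) (e : rel V) (e' : rel W) (h : V -> W) :
  {homo h : x y / e x y >-> e' x y} ->
  {homo h : x y / connect e x y >-> connect e' x y}.
Proof.
move=> h_homo x _ /connectP[p e_p ->]; apply/connectP.
by exists (map h p); [exact: homo_path e_p | rewrite last_map].
Qed.

Lemma connect_induced (V : finType) (e : rel V) (C : {set V}) :
  closed e C -> forall a b : {x | x \in C},
  connect e (val a) (val b) -> connect (induced e C) a b.
Proof.
move=> C_closed a b /connectP[p]; elim: p a => [|c p IHp] a /=.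
  by move=> _ /val_inj ->.
case/andP=> e_ac e_p b_last.
have cC : c \in C by rewrite -(C_closed _ _ e_ac) (valP a).
by apply: connect_trans (IHp (Sub c cC) e_p b_last); apply: connect1.
Qed.

Lemma giso_refl (V : finType) (e : rel V) : giso e e.
Proof. by exists id; split; first exists id. Qed.

Section InvolutiveAutomorphism.

Variables (V : finType) (e : rel V) (t : V -> V).
Hypotheses (e_sym : symmetric e) (e_irr : irreflexive e).
Hypotheses (t_inv : involutive t) (t_aut : forall x y, e (t x) (t y) = e x y).

Lemma connect_aut x y : connect e (t x) (t y) = connect e x y.
Proof.
have t_homo : {homo t : x y / connect e x y}.
  by apply: connect_homo => a b; rewrite t_aut.
by apply/idP/idP => [/t_homo|/t_homo //]; rewrite !t_inv.
Qed.

Lemma closed_relU_frel (P : {pred V}) :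
  closed e P -> (forall x, (t x \in P) = (x \in P)) ->
  closed (relU e (frel t)) P.
Proof. by move=> P_closed P_t x y /= /orP[/P_closed | /eqP <-]. Qed.

Section SwappedComponent.

Variable C : {set V}.
Hypothesis C_closed : closed e C.
Hypothesis t_swap : forall x, (t x \in C) = (x \notin C).

Lemma giso_induced_setC : giso (induced e (~: C)) (induced e C).
Proof.
have tC (a : {x | x \in ~: C}) : t (val a) \in C.
  by rewrite t_swap -in_setC (valP a).
have tCC (b : {x | x \in C}) : t (val b) \in ~: C.
  by rewrite in_setC -t_swap t_inv (valP b).
exists (fun a => Sub (t (val a)) (tC a)); split=> [|a a'].
  exists (fun b => Sub (t (val b)) (tCC b)) => ?;
    by apply: val_inj; rewrite /= t_inv.
exact: t_aut.
Qed.

(* [c0] only serves as the default value of [insubd]. *)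
Lemma giso_relU_cartK2 (c0 : {x | x \in C}) :
  giso (relU e (frel t)) (cartK2 (induced e C)).
Proof.
pose h x := (insubd c0 (if x \in C then x else t x), x \notin C).
pose g (p : {x | x \in C} * bool) := if p.2 then t (val p.1) else val p.1.
have tC x : x \notin C -> t x \in C by rewrite t_swap.
exists h; split.
  exists g => [x | [a [|]]]; rewrite /g /h /=.
  - by case: (boolP (x \in C)) => xC /=; rewrite [sval _]insubdK ?t_inv ?tC.
  - by have aC := svalP a; rewrite t_swap aC /= t_inv valKd.
  - by have aC := svalP a; rewrite aC valKd.
move=> x y; rewrite /cartK2 /induced /= -val_eqE /=.
case: (boolP (x \in C)) => xC; case: (boolP (y \in C)) => yC /=;
  rewrite ![sval _]insubdK ?tC //= ?andbF ?andbT ?orbF.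
- case: eqP => [tx_y|_]; last by rewrite orbF.
  by rewrite -tx_y t_swap xC in yC.
- rewrite (inv_eq t_inv) (_ : e x y = false) //.
  by apply: contraNF yC => /C_closed <-.
- rewrite (_ : e x y = false) //.
  by apply: contraNF xC => /C_closed ->.
- rewrite t_aut; case: eqP => [tx_y|_]; last by rewrite orbF.
  by rewrite -tx_y t_swap xC in yC.
Qed.

End SwappedComponent.

Section ComponentOfAVertex.

Variables (x0 : V) (f : rel V).
Hypotheses (f_def : f =2 relU e (frel t)) (f_conn : gconnected f).

Let e_csym : connect_sym e := sym_connect_sym e_sym.

Local Notation C := [set y | connect e x0 y].

Lemma closed_comp : closed e C.
Proof. by move=> x y e_xy; rewrite !inE; apply: connect_closed. Qed.

Lemma closed_aut_all (P : {pred V}) :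
  closed e P -> (forall x, (t x \in P) = (x \in P)) ->
  x0 \in P -> forall y, y \in P.
Proof.
move=> P_closed P_t x0P y; have := f_conn x0 y; rewrite (eq_connect f_def).
by move/(closed_connect (closed_relU_frel P_closed P_t)) <-.
Qed.

Lemma gconnected_of_connect_t : connect e x0 (t x0) -> gconnected e.
Proof.
move=> x0_tx0.
suff x0_conn y : connect e x0 y.
  by move=> x y; rewrite -(same_connect e_csym (x0_conn x)).
apply: (closed_aut_all (P := [pred y | connect e x0 y])) => [|x|].
- exact: connect_closed.
- by rewrite !inE (same_connect e_csym x0_tx0) connect_aut.
- by rewrite inE connect0.
Qed.

Lemma t_comp_swap :
  ~~ connect e x0 (t x0) -> forall x, (t x \in C) = (x \notin C).
Proof.
move=> x0_ntx0 x; rewrite !inE.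
have -> : connect e x0 (t x) = connect e (t x0) x by rewrite -connect_aut t_inv.
have : connect e x0 x || connect e (t x0) x.
  pose P := [pred y | connect e x0 y || connect e (t x0) y].
  apply: (closed_aut_all (P := P)) => [a b e_ab|a|]; rewrite !inE.
  - by congr orb; apply: connect_closed.
  - by rewrite -[connect e x0 (t a)]connect_aut t_inv connect_aut orbC.
  - by rewrite connect0.
case: (boolP (connect e x0 x)) => //= x0_x _; apply/negP => tx0_x.
by apply: (negP x0_ntx0); apply: connect_trans x0_x _; rewrite e_csym.
Qed.

Lemma comp_of_vertex (x0_ntx0 : ~~ connect e x0 (t x0)) x :
  [set y | connect e x y] = if x \in C then C else ~: C.
Proof.
apply/setP => y; case: ifP => xC.
  by rewrite !inE in xC *; rewrite (same_connect e_csym xC).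
have := t_comp_swap x0_ntx0 x; rewrite xC inE => x0_tx.
have tx0_x : connect e (t x0) x by rewrite -connect_aut t_inv.
rewrite in_setC -t_comp_swap // !inE -(same_connect e_csym tx0_x).
by rewrite -connect_aut t_inv.
Qed.

Lemma components_comp_setC :
  ~~ connect e x0 (t x0) -> components e = [set C; ~: C].
Proof.
move=> x0_ntx0; apply/setP => D; rewrite in_set2.
apply/imsetP/orP => [[x _ ->] | [] /eqP ->].
- by rewrite (comp_of_vertex x0_ntx0); case: ifP; [left | right].
- by exists x0; rewrite // (comp_of_vertex x0_ntx0) inE connect0.
- exists (t x0); rewrite // (comp_of_vertex x0_ntx0 (t x0)).
  by rewrite (t_comp_swap x0_ntx0) inE connect0.
Qed.

Theorem connected_or_two_swapped_components :
  gconnected e \/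
  (#|components e| = 2 /\
   exists (V0 : finType) (e0 : rel V0),
     symmetric e0 /\ irreflexive e0 /\ gconnected e0 /\
     (forall D, D \in components e -> giso (induced e D) e0) /\
     giso f (cartK2 e0)).
Proof.
have [x0_tx0 | x0_ntx0] := boolP (connect e x0 (t x0)).
  by left; apply: gconnected_of_connect_t.
right; have x0C : x0 \in C by rewrite inE connect0.
have t_swap := t_comp_swap x0_ntx0.
rewrite components_comp_setC //; split.
  rewrite cards2 (_ : C != ~: C) //.
  by apply/eqP => /setP/(_ x0); rewrite in_setC x0C.
exists {x | x \in C}, (induced e C); do 4?split.
- by move=> a b; apply: e_sym.
- by move=> a; apply: e_irr.
- move=> a b; apply: connect_induced; first exact: closed_comp.
  have aC := valP a; have bC := valP b; rewrite !inE in aC bC.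
  by rewrite -(same_connect e_csym aC).
- move=> D; rewrite in_set2 => /orP[] /eqP ->; first exact: giso_refl.
  exact: giso_induced_setC t_swap.
- have [h [h_bij h_adj]] := giso_relU_cartK2 closed_comp t_swap (Sub x0 x0C).
  by exists h; split=> // x y; rewrite f_def.
Qed.

End ComponentOfAVertex.
End InvolutiveAutomorphism.

Local Open Scope ring_scope.

Lemma symsetN (m : nat) (X : {set 'Z_m}) :
  symset X -> forall a, (- a \in X) = (a \in X).
Proof. by move=> X_sym a; rewrite -{1}X_sym (mem_imset _ _ (@oppr_inj _)). Qed.

Definition bicirc_shift (m : nat) (c : 'Z_m) (x : 'Z_m + 'Z_m) : 'Z_m + 'Z_m :=
  match x with inl i => inl (i + c) | inr i => inr (i + c) end.

Lemma bicirc_shift_involutive (m : nat) (c : 'Z_m) :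
  c + c = 0 -> involutive (bicirc_shift c).
Proof. by move=> cc [i|i] /=; rewrite -addrA cc addr0. Qed.

Lemma halfZ_double (m : nat) : ~~ odd m -> halfZ m + halfZ m = 0.
Proof.
move=> m_even; rewrite /halfZ -natrD addnn halfK (negbTE m_even) subn0.
by case: m m_even => [|[|m]] // _; apply: pchar_Zp.
Qed.

Section Bicirculant.

Variables (m : nat) (R S T : {set 'Z_m}).

Lemma bicirc_adj_sym : symset R -> symset T -> symmetric (bicirc_adj R S T).
Proof.
by move=> R_sym T_sym [i|i] [j|j] //=; rewrite -[i - j]opprB symsetN.
Qed.

Lemma bicirc_adj_irr : 0 \notin R -> 0 \notin T -> irreflexive (bicirc_adj R S T).
Proof. by move=> R0 T0 [i|i] /=; rewrite subrr; apply: negbTE. Qed.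

Lemma bicirc_adj_shift c x y :
  bicirc_adj R S T (bicirc_shift c x) (bicirc_shift c y) = bicirc_adj R S T x y.
Proof. by case: x y => [i|i] [j|j] /=; rewrite opprD addrACA subrr addr0. Qed.

Lemma bicirc_adj_setU1 c :
  bicirc_adj (R :|: [set c]) S (T :|: [set c]) =2
  relU (bicirc_adj R S T) (frel (bicirc_shift c)).
Proof.
case=> [i|i] [j|j] /=; rewrite ?in_setU ?in_set1 ?orbF //;
  by congr orb; rewrite subr_eq addrC; apply/eqP/eqP => [->|[->]].
Qed.

End Bicirculant.

Theorem lemma2p8 (m : nat) (R S T : {set 'Z_m}) :
  (0 < m)%N -> ~~ odd m ->
  symset R -> symset T -> 0 \notin R -> 0 \notin T -> 0 \in S ->
  #|R| = #|T| ->
  halfZ m \notin R -> halfZ m \notin T ->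
  gconnected (bicirc_adj (R :|: [set halfZ m]) S (T :|: [set halfZ m])) ->
  gconnected (bicirc_adj R S T) \/
  (#|components (bicirc_adj R S T)| = 2%N /\
   exists (V0 : finType) (e0 : rel V0),
     symmetric e0 /\ irreflexive e0 /\ gconnected e0 /\
     (forall C, C \in components (bicirc_adj R S T) ->
        giso (induced (bicirc_adj R S T) C) e0) /\
     giso (bicirc_adj (R :|: [set halfZ m]) S (T :|: [set halfZ m])) (cartK2 e0)).
Proof.
move=> _ m_even R_sym T_sym R0 T0 _ _ _ _ Geq_conn.
exact: (connected_or_two_swapped_components (bicirc_adj_sym S R_sym T_sym)
          (bicirc_adj_irr S R0 T0) (bicirc_shift_involutive (halfZ_double m_even))
          (bicirc_adj_shift R S T _) (inl 0) (bicirc_adj_setU1 R S T _) Geq_conn).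
Qed.
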